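(* Let $A\in\mathrm{SL}(2,\mathbb R)$. If $A\Lambda_q$ contains both $(1,0)^T$ and $(0,1)^T$, then $A\in G_q$ and in particular $A\Lambda_q=\Lambda_q$. Consequently: (1) for $B\in\mathrm{SL}(2,\mathbb R)$, $B\Lambda_q=\Lambda_q$ if and only if $B\in G_q$; hence the sets $C\Lambda_q$, $C\in\mathrm{SL}(2,\mathbb R)$, are in bijection with $\mathrm{SL}(2,\mathbb R)/G_q$ via $C\Lambda_q\leftrightarrow CG_q$; (2) for $B\in\mathrm{SL}(2,\mathbb R)$, if $B\Lambda_q$ contains a horizontal vector $(a,0)^T$ with $a>0$, then there exists $b\in\mathbb R$ with $B\Lambda_q=g_{a,b}\Lambda_q$.
   Context: Fix an integer $q\ge3$, let $\lambda_q=2\cos(\pi/q)$, and let $G_q\subset \mathrm{SL}(2,\mathbb R)$ be the Hecke triangle group generated by $S=\begin{pmatrix}0&-1\\1&0\end{pmatrix}$ and $T_q=\begin{pmatrix}1&\lambda_q\\0&1\end{pmatrix}$, acting linearly on $\mathbb R^2$. Set $\Lambda_q=G_q(1,0)^T$, and for $A\in\mathrm{SL}(2,\mathbb R)$ write $A\Lambda_q=\{A\mathbf v:\mathbf v\in\Lambda_q\}$. For $a>0$, $b\in\mathbb R$, $g_{a,b}=\begin{pmatrix}a&b\\0&a^{-1}\end{pmatrix}$. *)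

From Stdlib Require Import Reals Lra.
Open Scope R_scope.

Record mat2 : Type := Mat2 { m11 : R; m12 : R; m21 : R; m22 : R }.
Definition vec2 : Type := (R * R)%type.

Definition mmul (A B : mat2) : mat2 :=
  Mat2 (m11 A * m11 B + m12 A * m21 B) (m11 A * m12 B + m12 A * m22 B)
       (m21 A * m11 B + m22 A * m21 B) (m21 A * m12 B + m22 A * m22 B).

Definition mvec (A : mat2) (v : vec2) : vec2 :=
  (m11 A * fst v + m12 A * snd v, m21 A * fst v + m22 A * snd v).

Definition det2 (A : mat2) : R := m11 A * m22 A - m12 A * m21 A.
Definition SL2 (A : mat2) : Prop := det2 A = 1.

(* inverse of an SL(2,R) matrix (adjugate) *)
Definition minv (A : mat2) : mat2 := Mat2 (m22 A) (- m12 A) (- m21 A) (m11 A).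

Definition Id2 : mat2 := Mat2 1 0 0 1.

Definition lambda (q : nat) : R := 2 * cos (PI / INR q).

Definition Smat : mat2 := Mat2 0 (-1) 1 0.
Definition Tmat (q : nat) : mat2 := Mat2 1 (lambda q) 0 1.

Inductive Gq (q : nat) : mat2 -> Prop :=
| Gq_id : Gq q Id2
| Gq_S : forall M, Gq q M -> Gq q (mmul Smat M)
| Gq_Sinv : forall M, Gq q M -> Gq q (mmul (minv Smat) M)
| Gq_T : forall M, Gq q M -> Gq q (mmul (Tmat q) M)
| Gq_Tinv : forall M, Gq q M -> Gq q (mmul (minv (Tmat q)) M).

Definition Lambda (q : nat) (v : vec2) : Prop :=
  exists M, Gq q M /\ v = mvec M (1, 0).

Definition translate (A : mat2) (q : nat) (v : vec2) : Prop :=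
  exists w, Lambda q w /\ v = mvec A w.

Definition set_eq (P Q : vec2 -> Prop) : Prop := forall v, P v <-> Q v.

Definition gab (a b : R) : mat2 := Mat2 a b 0 (/ a).

From Stdlib Require Import Reals Nsatz Lra Lia ZArith.
Open Scope R_scope.

(* G_q is generated by S and V = T_q S, and V^q = -1.  Hence every vector of Lambda_q is
   V^j n with 0 <= j < q, where n is obtained from e1 by signs and moves n |-> S V^i n,
   0 < i < q.  The entries of V^i are the Chebyshev values sin(k pi/q) / sin(pi/q), which
   are >= 1 for 0 < k < q, so these moves keep n on the axis (+-e1) or in the quadrants
   +-{x <= -1, y >= 1}.  Therefore every vector of Lambda_q has second coordinate 0 or of
   absolute value >= 1.  If (a, 1) is in Lambda_q, reducing a modulo lambda_q to
   r in [0, lambda_q) and applying S shows that r and r - lambda_q both have this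
   property, which for lambda_q < 2 forces r = 0, i.e. a is in lambda_q Z.
   Finally, if A Lambda_q contains e1 and e2, moving the preimage of e1 to e1 by an
   element of G_q turns A into a shear [[1, b], [0, 1]] with (-b, 1) in Lambda_q, which
   is a power of T_q. *)

Lemma mvec_mmul A B v : mvec (mmul A B) v = mvec A (mvec B v).
Proof. destruct A, B, v; unfold mvec, mmul; cbn; f_equal; ring. Qed.

Lemma mvec_Id v : mvec Id2 v = v.
Proof. destruct v; unfold mvec, Id2; cbn; f_equal; ring. Qed.

Lemma mvec_minv_l A v : SL2 A -> mvec (minv A) (mvec A v) = v.
Proof. destruct A, v; unfold SL2, det2, mvec, minv; cbn; intros H; f_equal; nsatz. Qed.

Lemma mvec_minv_r A v : SL2 A -> mvec A (mvec (minv A) v) = v.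
Proof. destruct A, v; unfold SL2, det2, mvec, minv; cbn; intros H; f_equal; nsatz. Qed.

Lemma mmul_minv_r A : SL2 A -> mmul A (minv A) = Id2.
Proof. destruct A; unfold SL2, det2, mmul, minv, Id2; cbn; intros H; f_equal; nsatz. Qed.

Lemma mmul_assoc A B C : mmul (mmul A B) C = mmul A (mmul B C).
Proof. destruct A, B, C; unfold mmul; cbn; f_equal; ring. Qed.

Lemma mmul_Id_l A : mmul Id2 A = A.
Proof. destruct A; unfold mmul, Id2; cbn; f_equal; ring. Qed.

Lemma mmul_Id_r A : mmul A Id2 = A.
Proof. destruct A; unfold mmul, Id2; cbn; f_equal; ring. Qed.

Lemma minv_mmul A B : minv (mmul A B) = mmul (minv B) (minv A).
Proof. destruct A, B; unfold mmul, minv; cbn; f_equal; ring. Qed.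

Lemma minv_minv A : minv (minv A) = A.
Proof. destruct A; unfold minv; cbn; f_equal; ring. Qed.

Lemma minv_Id : minv Id2 = Id2.
Proof. unfold minv, Id2; cbn; f_equal; ring. Qed.

Lemma det_mmul A B : det2 (mmul A B) = det2 A * det2 B.
Proof. destruct A, B; unfold det2, mmul; cbn; ring. Qed.

Lemma det_minv A : det2 (minv A) = det2 A.
Proof. destruct A; unfold det2, minv; cbn; ring. Qed.

Lemma SL2_mmul A B : SL2 A -> SL2 B -> SL2 (mmul A B).
Proof. unfold SL2; intros hA hB; rewrite det_mmul, hA, hB; ring. Qed.

Lemma SL2_minv A : SL2 A -> SL2 (minv A).
Proof. unfold SL2; intros hA; rewrite det_minv; exact hA. Qed.

Lemma SL2_fixing_e1 a (X : mat2) : SL2 X -> a <> 0 -> mvec X (1, 0) = (a, 0) ->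
  X = gab a (m12 X).
Proof.
  destruct X as [x11 x12 x21 x22]; unfold SL2, det2, mvec, gab; cbn.
  intros hX ha E; injection E as E1 E2.
  assert (x11 = a) by lra; assert (x21 = 0) by lra; subst x11 x21.
  f_equal; field_simplify_eq; lra.
Qed.

Section HeckeGroup.

Variable q : nat.

Lemma Gq_SL2 M : Gq q M -> SL2 M.
Proof.
  unfold SL2; induction 1; rewrite ?det_mmul, ?det_minv, ?IHGq;
    unfold det2, Id2, Smat, Tmat; cbn; ring.
Qed.

Lemma Gq_mul M N : Gq q M -> Gq q N -> Gq q (mmul M N).
Proof.
  induction 1; intros HN; [rewrite mmul_Id_l; exact HN | ..];
    rewrite mmul_assoc; constructor; auto.
Qed.

Lemma Gq_S : Gq q Smat.
Proof. rewrite <- mmul_Id_r; do 2 constructor. Qed.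

Lemma Gq_Sinv : Gq q (minv Smat).
Proof. rewrite <- mmul_Id_r; do 2 constructor. Qed.

Lemma Gq_T : Gq q (Tmat q).
Proof. rewrite <- mmul_Id_r; do 2 constructor. Qed.

Lemma Gq_Tinv : Gq q (minv (Tmat q)).
Proof. rewrite <- mmul_Id_r; do 2 constructor. Qed.

Lemma Gq_minv M : Gq q M -> Gq q (minv M).
Proof.
  induction 1; rewrite ?minv_Id, ?minv_mmul, ?minv_minv; try constructor;
    apply Gq_mul; auto using Gq_S, Gq_Sinv, Gq_T, Gq_Tinv.
Qed.

Definition shear (x : R) : mat2 := Mat2 1 x 0 1.

Lemma Gq_shear (k : Z) : Gq q (shear (IZR k * lambda q)).
Proof.
  induction k using Z.peano_ind.
  - replace (shear (IZR 0 * lambda q)) with Id2 by (unfold shear, Id2; f_equal; ring).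
    constructor.
  - replace (shear (IZR (Z.succ k) * lambda q)) with (mmul (Tmat q) (shear (IZR k * lambda q)))
      by (rewrite succ_IZR; unfold shear, mmul, Tmat; cbn; f_equal; ring).
    constructor; auto.
  - replace (shear (IZR (Z.pred k) * lambda q))
      with (mmul (minv (Tmat q)) (shear (IZR k * lambda q)))
      by (rewrite <- Z.sub_1_r, minus_IZR; unfold shear, mmul, minv, Tmat; cbn; f_equal; ring).
    constructor; auto.
Qed.

Lemma Lambda_mvec M w : Gq q M -> Lambda q w -> Lambda q (mvec M w).
Proof.
  intros HM (N & HN & ->); exists (mmul M N); split.
  - apply Gq_mul; auto.
  - rewrite mvec_mmul; auto.
Qed.

Lemma Lambda_e1 : Lambda q (1, 0).
Proof. exists Id2; split; [constructor | rewrite mvec_Id; auto]. Qed.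

Lemma Lambda_e2 : Lambda q (0, 1).
Proof.
  replace (0, 1) with (mvec Smat (1, 0)) by (unfold mvec, Smat; cbn; f_equal; ring).
  apply Lambda_mvec; [apply Gq_S | apply Lambda_e1].
Qed.

Lemma translate_mvec C v : SL2 C -> translate C q (mvec C v) <-> Lambda q v.
Proof.
  intros hC; split.
  - intros (w & Hw & E); apply (f_equal (mvec (minv C))) in E.
    rewrite !mvec_minv_l in E by exact hC; subst; exact Hw.
  - intros Hv; exists v; auto.
Qed.

Lemma translate_minv_mmul C D v : SL2 C ->
  translate (mmul (minv C) D) q v <-> translate D q (mvec C v).
Proof.
  intros hC; split; intros (w & Hw & E); exists w; split; auto.
  - rewrite E, mvec_mmul, mvec_minv_r; auto.
  - rewrite mvec_mmul, <- E, mvec_minv_l; auto.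
Qed.

Lemma translate_mmul_Gq B M : Gq q M -> set_eq (translate (mmul B M) q) (translate B q).
Proof.
  intros HM v; split; intros (w & Hw & ->).
  - exists (mvec M w); split; [apply Lambda_mvec; auto | apply mvec_mmul].
  - exists (mvec (minv M) w); split.
    + apply Lambda_mvec; auto using Gq_minv.
    + rewrite mvec_mmul, mvec_minv_r; [reflexivity | apply Gq_SL2, HM].
Qed.

Lemma translate_Gq M : Gq q M -> set_eq (translate M q) (Lambda q).
Proof.
  intros HM v; rewrite <- (mmul_Id_l M); split.
  - intros H; apply translate_mmul_Gq in H; auto.
    destruct H as (w & Hw & ->); rewrite mvec_Id; exact Hw.
  - intros Hv; apply translate_mmul_Gq; auto; exists v; rewrite mvec_Id; auto.
Qed.

Lemma translate_eq_iff C D : SL2 C ->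
  set_eq (translate C q) (translate D q) <->
  set_eq (translate (mmul (minv C) D) q) (Lambda q).
Proof.
  intros hC; split; intros H v.
  - rewrite translate_minv_mmul, <- (H (mvec C v)), translate_mvec by exact hC; tauto.
  - rewrite <- (mvec_minv_r C v) by exact hC.
    rewrite translate_mvec, <- (H (mvec (minv C) v)), translate_minv_mmul by exact hC.
    tauto.
Qed.

Lemma translate_eq_gab B a : SL2 B -> 0 < a -> translate B q (a, 0) ->
  exists b, set_eq (translate B q) (translate (gab a b) q).
Proof.
  intros hB ha (w & (M & HM & ->) & E); rewrite <- mvec_mmul in E.
  exists (m12 (mmul B M)).
  rewrite <- (SL2_fixing_e1 a (mmul B M)); [| apply SL2_mmul, Gq_SL2, HM | lra | auto].
  - intros v; symmetry; apply translate_mmul_Gq, HM.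
  - exact hB.
Qed.

End HeckeGroup.

(* [cheb l k = U_(k-1) (l/2)], Chebyshev polynomials of the second kind. *)
Fixpoint cheb (l : R) (k : nat) : R :=
  match k with
  | O => 0
  | S O => 1
  | S (S j as k') => l * cheb l k' - cheb l j
  end.

Lemma cheb_SS l k : cheb l (S (S k)) = l * cheb l (S k) - cheb l k.
Proof. reflexivity. Qed.

Lemma cheb_two_cos t k : sin t <> 0 -> cheb (2 * cos t) k = sin (INR k * t) / sin t.
Proof.
  intros hs.
  enough (H : cheb (2 * cos t) k = sin (INR k * t) / sin t /\
              cheb (2 * cos t) (S k) = sin (INR (S k) * t) / sin t) by apply H.
  induction k as [|k [IH1 IH2]].
  - cbn; split; [rewrite Rmult_0_l, sin_0 | rewrite Rmult_1_l]; field; exact hs.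
  - split; [exact IH2|].
    rewrite cheb_SS, IH1, IH2, !S_INR.
    replace ((INR k + 1 + 1) * t) with ((INR k + 1) * t + t) by ring.
    replace (INR k * t) with ((INR k + 1) * t - t) by ring.
    rewrite sin_plus, sin_minus; field; exact hs.
Qed.

Section HeckeAngle.

Variable q : nat.
Hypothesis hq : (3 <= q)%nat.

Let theta := PI / INR q.

Lemma INR_q_ge3 : 3 <= INR q.
Proof. replace 3 with (INR 3) by (cbn; lra); apply le_INR, hq. Qed.

Lemma theta_bounds : 0 < theta <= PI / 3.
Proof.
  pose proof PI_RGT_0; pose proof INR_q_ge3; unfold theta; split.
  - apply Rdiv_lt_0_compat; lra.
  - apply Rmult_le_compat_l; [lra | apply Rinv_le_contravar; lra].
Qed.

Lemma sin_theta_pos : 0 < sin theta.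
Proof. pose proof theta_bounds; pose proof PI_RGT_0; apply sin_gt_0; lra. Qed.

Lemma lambda_bounds : 0 < lambda q < 2.
Proof.
  pose proof theta_bounds; pose proof PI_RGT_0; pose proof sin_theta_pos.
  assert (0 < cos theta) by (apply cos_gt_0; lra).
  pose proof (sin2_cos2 theta); unfold Rsqr in *.
  unfold lambda; fold theta; split; nra.
Qed.

Lemma cheb_lambda k : cheb (lambda q) k = sin (INR k * theta) / sin theta.
Proof. pose proof sin_theta_pos; apply cheb_two_cos; lra. Qed.

Lemma INR_q_theta : INR q * theta = PI.
Proof. pose proof INR_q_ge3; unfold theta; field; lra. Qed.

Lemma cheb_q : cheb (lambda q) q = 0.
Proof. rewrite cheb_lambda, INR_q_theta, sin_PI; unfold Rdiv; ring. Qed.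

Lemma cheb_pred_q : cheb (lambda q) (q - 1) = 1.
Proof.
  pose proof sin_theta_pos.
  rewrite cheb_lambda, minus_INR by lia; cbn [INR].
  replace ((INR q - 1) * theta) with (PI - theta) by (rewrite <- INR_q_theta; ring).
  rewrite sin_PI_x; field; lra.
Qed.

Lemma cheb_pred_pred_q : cheb (lambda q) (q - 2) = lambda q.
Proof.
  pose proof (cheb_SS (lambda q) (q - 2)) as E.
  replace (S (S (q - 2))) with q in E by lia; replace (S (q - 2)) with (q - 1)%nat in E by lia.
  rewrite cheb_q, cheb_pred_q in E; lra.
Qed.

Lemma cheb_nonneg k : (k <= q)%nat -> 0 <= cheb (lambda q) k.
Proof.
  intros hk; pose proof theta_bounds; pose proof sin_theta_pos.
  rewrite cheb_lambda; unfold Rdiv; apply Rmult_le_pos; [|left; apply Rinv_0_lt_compat; lra].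
  apply sin_ge_0; [apply Rmult_le_pos; [apply pos_INR | lra]|].
  rewrite <- INR_q_theta; apply Rmult_le_compat_r; [lra | apply le_INR, hk].
Qed.

Lemma cheb_ge1 k : (1 <= k)%nat -> (k <= q - 1)%nat -> 1 <= cheb (lambda q) k.
Proof.
  intros hk1 hk2; pose proof theta_bounds; pose proof sin_theta_pos; pose proof PI_RGT_0.
  apply le_INR in hk1, hk2; rewrite minus_INR in hk2 by lia; cbn [INR] in hk1, hk2.
  assert (theta <= INR k * theta) by nra.
  assert (INR k * theta <= PI - theta) by (rewrite <- INR_q_theta; nra).
  rewrite cheb_lambda, <- (Rdiv_diag (sin theta)) by lra; unfold Rdiv.
  apply Rmult_le_compat_r; [left; apply Rinv_0_lt_compat; lra|].
  destruct (Rle_dec (INR k * theta) (PI / 2)).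
  - apply sin_incr_1; lra.
  - rewrite <- (sin_PI_x (INR k * theta)); apply sin_incr_1; lra.
Qed.

End HeckeAngle.

Definition negv (v : vec2) : vec2 := (- fst v, - snd v).
Definition Svec (v : vec2) : vec2 := (- snd v, fst v).
(* [Vvec (lambda q)] is the action of [T_q S]. *)
Definition Vvec (l : R) (v : vec2) : vec2 := (l * fst v - snd v, fst v).
Definition Viter (l : R) (k : nat) : vec2 -> vec2 := Nat.iter k (Vvec l).

Lemma negv_negv v : negv (negv v) = v.
Proof. destruct v; unfold negv; cbn; f_equal; ring. Qed.

Lemma Svec_negv v : Svec (negv v) = negv (Svec v).
Proof. reflexivity. Qed.

Lemma Viter_S l k v : Viter l (S k) v = Vvec l (Viter l k v).
Proof. reflexivity. Qed.

Lemma Viter_negv l k v : Viter l k (negv v) = negv (Viter l k v).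
Proof.
  induction k as [|k IH]; [reflexivity|].
  rewrite !Viter_S, IH; unfold Vvec, negv; cbn; f_equal; ring.
Qed.

Lemma Viter_formula l k x y : Viter l (S k) (x, y) =
  (cheb l (S (S k)) * x - cheb l (S k) * y, cheb l (S k) * x - cheb l k * y).
Proof.
  induction k as [|k IH].
  - unfold Viter, Vvec; cbn; f_equal; ring.
  - rewrite Viter_S, IH, (cheb_SS l (S k)), (cheb_SS l k); unfold Vvec; cbn [fst snd].
    f_equal; ring.
Qed.

Definition northwest (v : vec2) : Prop := fst v <= -1 /\ 1 <= snd v.

Definition admissible (v : vec2) : Prop :=
  v = (1, 0) \/ v = negv (1, 0) \/ northwest v \/ northwest (negv v).

Definition height_gap (y : R) : Prop := y = 0 \/ 1 <= Rabs y.

Inductive Base (q : nat) : vec2 -> Prop :=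
| Base_e1 : Base q (1, 0)
| Base_negv v : Base q v -> Base q (negv v)
| Base_SViter i v : (1 <= i <= q - 1)%nat -> Base q v -> Base q (Svec (Viter (lambda q) i v)).

Definition Reachable (q : nat) (v : vec2) : Prop :=
  exists j n, (j <= q - 1)%nat /\ Base q n /\ v = Viter (lambda q) j n.

Lemma admissible_negv v : admissible v -> admissible (negv v).
Proof.
  unfold admissible; rewrite negv_negv; intros [->|[->|[h|h]]]; auto.
  left; apply negv_negv.
Qed.

Lemma admissible_height x y : admissible (x, y) -> height_gap y.
Proof.
  unfold admissible, northwest, height_gap, negv; cbn.
  intros [E|[E|[h|h]]]; try (injection E as -> ->); [left | left | right..]; try ring;
    [rewrite Rabs_right | rewrite Rabs_left]; lra.
Qed.

Lemma admissible_cheb_height x y b c : 1 <= b -> 0 <= c -> admissible (x, y) ->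
  height_gap (b * x - c * y).
Proof.
  unfold admissible, northwest, height_gap, negv; cbn; intros hb hc.
  intros [E|[E|[h|h]]]; try (injection E as -> ->); right;
    [rewrite Rabs_right | rewrite Rabs_left | rewrite Rabs_left | rewrite Rabs_right]; nra.
Qed.

Lemma admissible_cheb_map x y a b c : 1 <= b -> 0 <= c -> (1 <= a \/ a = 0 /\ b = 1) ->
  admissible (x, y) -> admissible (c * y - b * x, a * x - b * y).
Proof.
  unfold admissible, northwest, negv; cbn; intros hb hc ha.
  intros [E|[E|[h|h]]]; try (injection E as -> ->);
    destruct ha as [ha|[-> ->]]; cbn.
  all: first [ right; right; left; split; nra | right; right; right; split; nra
             | left; f_equal; ring | right; left; f_equal; ring ].
Qed.

Lemma exists_floor_mul a l : 0 < l -> exists k : Z, IZR k * l <= a < IZR k * l + l.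
Proof.
  intros hl; destruct (archimed (a / l)) as [hup hup'].
  exists (up (a / l) - 1)%Z; rewrite minus_IZR.
  assert (E : a = a / l * l) by (field; lra).
  set (t := a / l) in *; set (u := IZR (up t)) in *; rewrite E; split; nra.
Qed.

Section HeckeLattice.

Variable q : nat.
Hypothesis hq : (3 <= q)%nat.

Lemma Viter_pred_q x y : Viter (lambda q) (q - 1) (x, y) = (- y, x - lambda q * y).
Proof.
  replace (q - 1)%nat with (S (q - 2)) by lia; rewrite Viter_formula.
  replace (S (S (q - 2))) with q by lia; replace (S (q - 2)) with (q - 1)%nat by lia.
  rewrite cheb_q, cheb_pred_q, cheb_pred_pred_q by exact hq; f_equal; ring.
Qed.

Lemma Viter_q v : Viter (lambda q) q v = negv v.
Proof.
  destruct v as [x y].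
  pose proof (Viter_S (lambda q) (q - 1) (x, y)) as E.
  replace (S (q - 1)) with q in E by lia; rewrite E, Viter_pred_q.
  unfold Vvec, negv; cbn; f_equal; ring.
Qed.

Lemma mvec_S v : mvec Smat v = Svec v.
Proof. destruct v; unfold mvec, Smat, Svec; cbn; f_equal; ring. Qed.

Lemma mvec_Sinv v : mvec (minv Smat) v = negv (Svec v).
Proof. destruct v; unfold mvec, minv, Smat, Svec, negv; cbn; f_equal; ring. Qed.

Lemma mvec_T v : mvec (Tmat q) v = negv (Vvec (lambda q) (Svec v)).
Proof. destruct v; unfold mvec, Tmat, Vvec, Svec, negv; cbn; f_equal; ring. Qed.

Lemma mvec_Tinv v : mvec (minv (Tmat q)) v = Svec (negv (Viter (lambda q) (q - 1) v)).
Proof.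
  destruct v; rewrite Viter_pred_q; unfold mvec, minv, Tmat, Svec, negv; cbn; f_equal; ring.
Qed.

Lemma Reachable_negv v : Reachable q v -> Reachable q (negv v).
Proof.
  intros (j & n & hj & hn & ->); exists j, (negv n); rewrite Viter_negv.
  repeat split; auto using Base_negv.
Qed.

Lemma Reachable_Vvec v : Reachable q v -> Reachable q (Vvec (lambda q) v).
Proof.
  intros (j & n & hj & hn & ->); rewrite <- Viter_S.
  destruct (Nat.eq_dec j (q - 1)) as [->|ne].
  - exists 0%nat, (negv n); replace (S (q - 1)) with q by lia; rewrite Viter_q.
    repeat split; auto using Base_negv; lia.
  - exists (S j), n; repeat split; auto; lia.
Qed.

Lemma Reachable_Viter k v : Reachable q v -> Reachable q (Viter (lambda q) k v).
Proof. induction k; intros H; [exact H | apply Reachable_Vvec; auto]. Qed.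

Lemma Reachable_Svec v : Reachable q v -> Reachable q (Svec v).
Proof.
  intros (j & n & hj & hn & ->); destruct j as [|j].
  - cbn; clear hj; induction hn as [| n _ IH | i n hi hn _].
    + exists (q - 1)%nat, (1, 0); rewrite Viter_pred_q.
      repeat split; [lia | apply Base_e1 | unfold Svec; cbn; f_equal; ring].
    + rewrite Svec_negv; apply Reachable_negv, IH.
    + exists i, (negv n); rewrite Viter_negv.
      repeat split; [lia | apply Base_negv, hn].
  - exists 0%nat, (Svec (Viter (lambda q) (S j) n)).
    repeat split; [lia | apply Base_SViter; auto; lia].
Qed.

Lemma Lambda_Reachable v : Lambda q v -> Reachable q v.
Proof.
  intros (M & HM & ->); induction HM as [| M _ IH | M _ IH | M _ IH | M _ IH];
    rewrite ?mvec_mmul, ?mvec_S, ?mvec_Sinv, ?mvec_T, ?mvec_Tinv.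
  - exists 0%nat, (1, 0); rewrite mvec_Id; repeat split; [lia | apply Base_e1].
  - apply Reachable_Svec, IH.
  - apply Reachable_negv, Reachable_Svec, IH.
  - apply Reachable_negv, Reachable_Vvec, Reachable_Svec, IH.
  - apply Reachable_Svec, Reachable_negv, Reachable_Viter, IH.
Qed.

Lemma admissible_SViter i v : (1 <= i <= q - 1)%nat -> admissible v ->
  admissible (Svec (Viter (lambda q) i v)).
Proof.
  intros hi; destruct i as [|i]; [lia|]; destruct v as [x y].
  rewrite Viter_formula; unfold Svec; cbn [fst snd].
  replace (- (cheb (lambda q) (S i) * x - cheb (lambda q) i * y))
    with (cheb (lambda q) i * y - cheb (lambda q) (S i) * x) by ring.
  apply admissible_cheb_map.
  - apply cheb_ge1; lia.
  - apply cheb_nonneg; lia.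
  - destruct (Nat.eq_dec (S i) (q - 1)) as [e|ne].
    + right; rewrite e, cheb_pred_q by exact hq; split; [|reflexivity].
      replace (S (q - 1)) with q by lia; apply cheb_q, hq.
    + left; apply cheb_ge1; lia.
Qed.

Lemma Base_admissible v : Base q v -> admissible v.
Proof.
  induction 1.
  - left; reflexivity.
  - apply admissible_negv; auto.
  - apply admissible_SViter; auto.
Qed.

Lemma Lambda_height_gap v : Lambda q v -> height_gap (snd v).
Proof.
  intros Hv; destruct (Lambda_Reachable v Hv) as (j & [x y] & hj & hn & ->).
  apply Base_admissible in hn; destruct j as [|j]; [exact (admissible_height x y hn)|].
  rewrite Viter_formula; apply admissible_cheb_height; auto.
  - apply cheb_ge1; lia.
  - apply cheb_nonneg; lia.
Qed.

Lemma Lambda_height_gap_shift a (k : Z) : Lambda q (a, 1) -> height_gap (a - IZR k * lambda q).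
Proof.
  intros Ha.
  assert (E : mvec Smat (mvec (shear (IZR (- k) * lambda q)) (a, 1))
              = (-1, a - IZR k * lambda q))
    by (rewrite opp_IZR; unfold mvec, shear, Smat; cbn; f_equal; ring).
  assert (H : Lambda q (mvec Smat (mvec (shear (IZR (- k) * lambda q)) (a, 1))))
    by (apply Lambda_mvec; [apply Gq_S | apply Lambda_mvec; [apply Gq_shear | exact Ha]]).
  rewrite E in H; exact (Lambda_height_gap _ H).
Qed.

Lemma Lambda_height_one a : Lambda q (a, 1) -> exists k : Z, a = IZR k * lambda q.
Proof.
  intros Ha; destruct (lambda_bounds q hq) as [hl0 hl2].
  destruct (exists_floor_mul a (lambda q) hl0) as [k hk]; exists k.
  destruct (Lambda_height_gap_shift a k Ha) as [h0|h0]; [lra|].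
  destruct (Lambda_height_gap_shift a (k + 1) Ha) as [h1|h1]; rewrite plus_IZR in h1; [lra|].
  rewrite Rabs_right in h0 by lra; rewrite Rabs_left in h1 by lra; lra.
Qed.

Lemma Gq_shear_of_Lambda b : Lambda q (- b, 1) -> Gq q (shear b).
Proof.
  intros H; destruct (Lambda_height_one _ H) as [k hk].
  replace b with (IZR (- k) * lambda q) by (rewrite opp_IZR; lra); apply Gq_shear.
Qed.

Lemma Gq_of_translate_basis A : SL2 A ->
  translate A q (1, 0) -> translate A q (0, 1) -> Gq q A.
Proof.
  intros hA (w & (M & HM & ->) & E1) (u & Hu & E2).
  set (B := mmul A M).
  assert (hB : SL2 B) by exact (SL2_mmul _ _ hA (Gq_SL2 q M HM)).
  assert (EB : B = shear (m12 B)).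
  { rewrite (SL2_fixing_e1 1 B) at 1; [unfold gab, shear; rewrite Rinv_1 | exact hB | lra |].
    - reflexivity.
    - unfold B; rewrite mvec_mmul; auto. }
  assert (Hu' : Lambda q (- m12 B, 1)).
  { replace (- m12 B, 1) with (mvec (minv M) u).
    - apply Lambda_mvec; [apply Gq_minv |]; auto.
    - symmetry; transitivity (mvec (minv B) (0, 1)).
      + rewrite EB; unfold mvec, minv, shear; cbn; f_equal; ring.
      + rewrite E2; unfold B; rewrite minv_mmul, mvec_mmul, mvec_minv_l; auto. }
  replace A with (mmul B (minv M)) by
    (unfold B; rewrite mmul_assoc, mmul_minv_r, mmul_Id_r; [reflexivity | apply (Gq_SL2 q), HM]).
  apply Gq_mul; [rewrite EB; apply Gq_shear_of_Lambda, Hu' | apply Gq_minv, HM].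
Qed.

Lemma translate_eq_Lambda_iff B : SL2 B -> set_eq (translate B q) (Lambda q) <-> Gq q B.
Proof.
  intros hB; split; [|apply translate_Gq].
  intros H; apply Gq_of_translate_basis; [exact hB | apply H, Lambda_e1 | apply H, Lambda_e2].
Qed.

End HeckeLattice.

Theorem mainTheorem4 (q : nat) (hq : (3 <= q)%nat) :
  (* main claim *)
  (forall A : mat2, SL2 A ->
     translate A q (1, 0) -> translate A q (0, 1) ->
     Gq q A /\ set_eq (translate A q) (Lambda q)) /\
  (* (1): stabilizer of Lambda_q is G_q *)
  (forall B : mat2, SL2 B ->
     (set_eq (translate B q) (Lambda q) <-> Gq q B)) /\
  (* (1): C Lambda_q <-> C G_q is a well-defined bijection:
     C1 Lambda_q = C2 Lambda_q iff C1 G_q = C2 G_q iff C1^{-1} C2 in G_q *)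
  (forall C1 C2 : mat2, SL2 C1 -> SL2 C2 ->
     (set_eq (translate C1 q) (translate C2 q) <-> Gq q (mmul (minv C1) C2))) /\
  (* (2) *)
  (forall (B : mat2) (a : R), SL2 B -> 0 < a -> translate B q (a, 0) ->
     exists b : R, set_eq (translate B q) (translate (gab a b) q)).
Proof.
  split; [|split; [|split]].
  - intros A hA h1 h2.
    assert (G : Gq q A) by exact (Gq_of_translate_basis q hq A hA h1 h2).
    split; [exact G | apply translate_Gq, G].
  - exact (translate_eq_Lambda_iff q hq).
  - intros C1 C2 h1 h2.
    rewrite translate_eq_iff by exact h1.
    apply (translate_eq_Lambda_iff q hq), SL2_mmul; [apply SL2_minv, h1 | exact h2].
  - exact (translate_eq_gab q).
Qed.
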